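(* Let $S$ and $T$ be trees. For each shuffle $A$ of $S$ and $T$, the edge labelling gives an injective map of posets $E(A)\hookrightarrow E(S)\times E(T)$ and hence an embedding $BA\hookrightarrow B(E(S)\times E(T))\cong BS\times BT$. Then $$BS\times BT=\bigcup_{A\in Sh(S,T)} BA,$$ i.e. the images of these embeddings jointly cover $BS\times BT$. Equivalently at the simplicial level, every chain $(s_0,t_0)\le\dots\le(s_n,t_n)$ in the product poset $E(S)\times E(T)$ is contained in $E(A)$ for some shuffle $A$.
   Context: A tree is a finite connected graph without cycles whose external edges are open. One external edge is the root; the others are leaves. Each vertex has one outgoing edge (towards the root) and a strictly positive number of incoming edges. No planar structure. $E(T)$ is the edge set partially ordered by $e\le e'$ iff $e$ lies on the path from $e'$ to the root. For a finite poset $P$, its classifying space $B(P)$ is the geometric realization of its nerve (the simplicial complex of chains of $P$); $BT:=B(E(T))$. Concretely, a point of $BT$ is a function $\lambda:E(T)\to[0,1]$ with $\sum_e\lambda(e)=1$ whose support lies in a single chain (branch), with the subspace topology from $[0,1]^{E(T)}$. There is a natural homeomorphism $B(P\times Q)\cong B(P)\times B(Q)$ for finite posets $P,Q$. Shuffle: for trees $S,T$ with root edges $r_S,r_T$, a shuffle is a tree $A$ with edges labelled by pairs $(s,t)\in E(S)\times E(T)$ such that: (1) the root of $A$ is labelled $(r_S,r_T)$; (2) the labelling restricts to a bijection from leaves of $A$ onto $\mathrm{Leaves}(S)\times\mathrm{Leaves}(T)$; (3) if an edge labelled $(s,t)$ is not a leaf, the incoming edges of the vertex of $A$ above it are labelled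 either exactly $(s_1,t),\dots,(s_m,t)$ for $s_1,\dots,s_m$ the edges immediately above $s$ in $S$, or exactly $(s,t_1),\dots,(s,t_n)$ for $t_1,\dots,t_n$ the edges immediately above $t$ in $T$. Shuffles are taken up to isomorphism of labelled trees; $Sh(S,T)$ is the set of shuffles. *)

From HB Require Import structures.
From mathcomp Require Import all_boot.
Set Implicit Arguments. Unset Strict Implicit. Unset Printing Implicit Defensive.

(* A tree (no planar structure, no stumps) encoded by its finite set of edges,
   its root edge, and the map sending a non-root edge to the outgoing edge of
   the vertex above which it sits (the root is sent to itself).  Every edge
   reaches the root by iterating the parent map (connected, acyclic).
   The vertex above a non-leaf edge e has as incoming edges the children of e;
   an edge without children is a leaf (so every vertex has >= 1 inputs). *)
Record tree := Tree {
  edge : finType;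
  troot : edge;
  tpar : edge -> edge;
  tpar_root : tpar troot = troot;
  treach : forall e, exists n, iter n tpar e = troot
}.

Definition children (T : tree) (e : edge T) : {set edge T} :=
  [set c | (c != @troot T) && (@tpar T c == e)].

Definition leaves (T : tree) : {set edge T} :=
  [set e | @children T e == set0].

Definition tle (T : tree) (e e' : edge T) : Prop :=
  exists n, iter n (@tpar T) e' = e.

Definition ptle (S T : tree) (p q : edge S * edge T) : Prop :=
  tle p.1 q.1 /\ tle p.2 q.2.

Definition is_chain (X : finType) (le : X -> X -> Prop) (C : {set X}) : Prop :=
  forall x y, x \in C -> y \in C -> le x y \/ le y x.

Record shuffle (S T : tree) := Shuffle {
  sh_tree : tree;
  sh_lab : edge sh_tree -> edge S * edge T;
  sh_root : sh_lab (troot sh_tree) = (troot S, troot T);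
  sh_leaves_inj : {in leaves sh_tree &, injective sh_lab};
  sh_leaves_img : sh_lab @: leaves sh_tree = setX (leaves S) (leaves T);
  sh_vertex : forall a, a \notin leaves sh_tree ->
    {in children a &, injective sh_lab} /\
    (sh_lab @: children a =
       [set (s', (sh_lab a).2) | s' in children (sh_lab a).1]
     \/ sh_lab @: children a =
       [set ((sh_lab a).1, t') | t' in children (sh_lab a).2])
}.

From HB Require Import structures.
From mathcomp Require Import all_boot zify.
Set Implicit Arguments. Unset Strict Implicit. Unset Printing Implicit Defensive.

(* Along each edge of a shuffle the labelling moves one coordinate to a child,
   so it is monotone; and since the children of a vertex carry distinct
   siblings in one and the same coordinate, edges on different branches have
   incomparable labels: the labelling is an order embedding.
   Conversely, a shuffle is generated by any rule choosing, for each label, in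
   which of S and T the vertex above it branches: the labels reachable from the
   root form a tree, because a path that has entered an edge s of S can never
   come back to the parent of s.  For a chain C, branch in T exactly when the
   S-coordinate is a leaf or some element of C has the same S-coordinate and a
   strictly larger T-coordinate; the walk from the root towards any element of
   C then never turns away from it, so C lies among the reachable labels. *)

Section TreeOrder.
Variable T : tree.
Implicit Types a b c e x : edge T.
Local Notation par := (@tpar T).
Local Notation r := (@troot T).

Lemma tle_refl e : tle e e. Proof. by exists 0. Qed.

Lemma tle_trans a b c : tle a b -> tle b c -> tle a c.
Proof. by move=> [m <-] [n <-]; exists (m + n); rewrite iterD. Qed.

Lemma tle_par e : tle (par e) e. Proof. by exists 1. Qed.

Lemma tle_root e : tle r e. Proof. exact: treach. Qed.

Lemma iter_par_root n : iter n par r = r.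
Proof. by elim: n => //= n ->; rewrite tpar_root. Qed.

Lemma par_neq e : e != r -> par e != e.
Proof.
move=> ne; apply: contraNneq ne => fix_e; have [n <-] := treach e.
by elim: n => //= n /eqP <-; rewrite fix_e.
Qed.

Lemma tle_child e c : c \in children e -> tle e c.
Proof. by rewrite inE => /andP [_ /eqP <-]; exact: tle_par. Qed.

Lemma parent_notin_leaves e c : c \in children e -> e \notin leaves T.
Proof. by move=> hc; rewrite inE; apply/set0Pn; exists c. Qed.

Lemma treachb e : exists n, iter n par e == r.
Proof. by have [n h] := treach e; exists n; apply/eqP. Qed.

Definition depth e : nat := ex_minn (treachb e).

Lemma depth_spec e : iter (depth e) par e = r.
Proof. by rewrite /depth; case: ex_minnP => n /eqP. Qed.

Lemma depth_min e n : iter n par e = r -> depth e <= n.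
Proof. by rewrite /depth; case: ex_minnP => m _ H /eqP /H. Qed.

Lemma depth_root : depth r = 0.
Proof. by apply/eqP; rewrite -leqn0; apply: depth_min. Qed.

Lemma depth_par e : e != r -> depth e = (depth (par e)).+1.
Proof.
move=> ne; have le_depth : depth e <= (depth (par e)).+1.
  by apply: depth_min; rewrite iterSr depth_spec.
case E: (depth e) le_depth => [|k] le_depth.
  by move: ne; have := depth_spec e; rewrite E => /= ->; rewrite eqxx.
have : depth (par e) <= k by apply: depth_min; rewrite -iterSr -E depth_spec.
by move: le_depth; rewrite ltnS; lia.
Qed.

Lemma depth_child e c : c \in children e -> depth c = (depth e).+1.
Proof. by rewrite inE => /andP [cr /eqP <-]; exact: depth_par. Qed.

Lemma depth_iter n e : depth (iter n par e) = depth e - n.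
Proof.
elim: n e => [|n IH] e; first by rewrite subn0.
rewrite iterSr IH; case: (eqVneq e r) => [->|ne]; first by rewrite tpar_root depth_root.
by rewrite (depth_par ne) subSS.
Qed.

Lemma tle_depth a b : tle a b -> depth a <= depth b.
Proof. by case=> n <-; rewrite depth_iter leq_subr. Qed.

Lemma tle_anti a b : tle a b -> tle b a -> a = b.
Proof.
case=> [[|n] <-] // ba; have := tle_depth ba; rewrite depth_iter => le_depth.
have br : b = r by have := depth_spec b; have -> : depth b = 0 by lia.
by rewrite br iter_par_root.
Qed.

Lemma child_not_tle e c : c \in children e -> ~ tle c e.
Proof.
rewrite inE => /andP [cr /eqP <-] cp.
by move: (par_neq cr); rewrite (tle_anti (tle_par c) cp) eqxx.
Qed.

Lemma tle_cmp a b c : tle a c -> tle b c -> tle a b \/ tle b a.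
Proof.
case=> m <- [n <-]; case: (leqP m n) => h.
  by right; exists (n - m); rewrite -iterD subnK.
by left; exists (m - n); rewrite -iterD subnK // ltnW.
Qed.

Lemma tle_below a x : tle a x -> a != x -> tle a (par x).
Proof. by case=> [[|n]] <-; rewrite ?eqxx // => _; exists n; rewrite -iterSr. Qed.

Lemma tle_step a x : tle a x -> a != x -> exists2 c, c \in children a & tle c x.
Proof.
case=> n; elim: n => [|n IH] /= pa ne; first by rewrite pa eqxx in ne.
case: (eqVneq (iter n par x) r) => [E|E].
  by apply: IH => //; rewrite -pa E tpar_root.
by exists (iter n par x); [rewrite inE E pa eqxx | exists n].
Qed.

Lemma leaf_max l x : l \in leaves T -> tle l x -> x = l.
Proof.
move=> hl lx; apply/eqP; rewrite eq_sym; apply: contraTT hl => ne.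
by have [c hc _] := tle_step lx ne; exact: parent_notin_leaves hc.
Qed.

Lemma children_tle_eq e a b x :
  a \in children e -> b \in children e -> tle a x -> tle b x -> a = b.
Proof.
move=> ha hb ax bx.
wlog ab : a b ha hb ax bx / tle a b.
  by move=> wl; case: (tle_cmp ax bx) => [|/wl]; [exact: wl | move=> ->].
have pb : par b = e by move: hb; rewrite inE => /andP [_ /eqP].
case: (eqVneq a b) => // /(tle_below ab).
by rewrite pb => /(child_not_tle ha).
Qed.

Definition tleb a b : bool := [exists n : 'I_(depth b).+1, iter n par b == a].

Lemma tlebP a b : reflect (tle a b) (tleb a b).
Proof.
apply: (iffP existsP) => [[n /eqP <-] | [n <-]]; first by exists n.
case: (leqP n (depth b)) => hn; first by exists (Ordinal (hn : n < (depth b).+1)).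
exists ord_max; apply/eqP => /=.
by rewrite -(subnK (ltnW hn)) iterD depth_spec iter_par_root.
Qed.

End TreeOrder.

Section ProductOrder.
Variables S T : tree.
Implicit Types x y z : edge S * edge T.

Definition proot : edge S * edge T := (troot S, troot T).

Definition pdepth x : nat := depth x.1 + depth x.2.

Definition pstep x y : bool :=
  (y.1 \in children x.1) && (y.2 == x.2) || (y.1 == x.1) && (y.2 \in children x.2).

Lemma ptle_refl x : ptle x x.
Proof. by split; exact: tle_refl. Qed.

Lemma ptle_trans x y z : ptle x y -> ptle y z -> ptle x z.
Proof. by case=> h1 h2 [h3 h4]; split; [exact: tle_trans h3 | exact: tle_trans h4]. Qed.

Lemma ptle_anti x y : ptle x y -> ptle y x -> x = y.
Proof.
case: x y => [s t] [s' t'] [/= h1 h2] [/= h3 h4].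
by rewrite (tle_anti h1 h3) (tle_anti h2 h4).
Qed.

Lemma ptle_root x : ptle proot x.
Proof. by split; exact: tle_root. Qed.

Lemma ptle_pdepth x y : ptle x y -> pdepth x <= pdepth y.
Proof. by case=> /tle_depth h1 /tle_depth h2; rewrite leq_add. Qed.

Lemma pstep_ptle x y : pstep x y -> ptle x y.
Proof.
rewrite /ptle; case/orP => [/andP [h1 /eqP ->] | /andP [/eqP -> h2]].
  by split; [exact: tle_child | exact: tle_refl].
by split; [exact: tle_refl | exact: tle_child].
Qed.

Lemma pdepth_pstep x y : pstep x y -> pdepth y = (pdepth x).+1.
Proof.
rewrite /pdepth; case/orP => [/andP [h1 /eqP ->] | /andP [/eqP -> h2]].
  by rewrite (depth_child h1).
by rewrite (depth_child h2) addnS.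
Qed.

Lemma pstep_neq x y : pstep x y -> x != y.
Proof. by move/pdepth_pstep => e; apply/eqP => xy; rewrite xy in e; lia. Qed.

End ProductOrder.

Section ShuffleLabels.
Variables (S T : tree) (A : shuffle S T).
Local Notation TA := (sh_tree A).
Local Notation lab := (@sh_lab S T A).

Lemma pstep_lab c : c != troot TA -> pstep (lab (tpar c)) (lab c).
Proof.
move=> cr; have hc : c \in children (tpar c) by rewrite inE cr eqxx.
have lc : lab c \in lab @: children (tpar c) by exact: imset_f.
have [_ [E|E]] := sh_vertex (parent_notin_leaves hc); rewrite E in lc;
  by case/imsetP: lc => e he ->; rewrite /pstep /= he eqxx ?orbT.
Qed.

Lemma lab_par_ptle c : ptle (lab (tpar c)) (lab c).
Proof.
case: (eqVneq c (troot TA)) => [->|cr]; first by rewrite tpar_root; exact: ptle_refl.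
exact/pstep_ptle/pstep_lab.
Qed.

Lemma lab_tle a b : tle a b -> ptle (lab a) (lab b).
Proof.
case=> n <-; elim: n => [|n IH]; first exact: ptle_refl.
by rewrite iterS; exact: ptle_trans (lab_par_ptle _) IH.
Qed.

Lemma lab_siblings p a b z : a \in children p -> b \in children p ->
  ptle (lab a) z -> ptle (lab b) z -> a = b.
Proof.
move=> ha hb az bz; have [inj [E|E]] := sh_vertex (parent_notin_leaves ha);
  apply: inj => //.
- have /imsetP [s1 hs1 ea] : lab a \in [set (s, (lab p).2) | s in children (lab p).1].
    by rewrite -E imset_f.
  have /imsetP [s2 hs2 eb] : lab b \in [set (s, (lab p).2) | s in children (lab p).1].
    by rewrite -E imset_f.
  rewrite ea in az; rewrite eb in bz.
  by rewrite ea eb (children_tle_eq hs1 hs2 az.1 bz.1).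
- have /imsetP [t1 ht1 ea] : lab a \in [set ((lab p).1, t) | t in children (lab p).2].
    by rewrite -E imset_f.
  have /imsetP [t2 ht2 eb] : lab b \in [set ((lab p).1, t) | t in children (lab p).2].
    by rewrite -E imset_f.
  rewrite ea in az; rewrite eb in bz.
  by rewrite ea eb (children_tle_eq ht1 ht2 az.2 bz.2).
Qed.

Lemma lab_ptle a b : ptle (lab a) (lab b) <-> tle a b.
Proof.
split; last exact: lab_tle.
elim: (depth a).+1 {-2}a (ltnSn (depth a)) => // k IH {}a lt_a ab.
case: (eqVneq a (troot TA)) => [->|ar]; first exact: tle_root.
have pa_b : tle (tpar a) b.
  apply: IH (ptle_trans (lab_par_ptle a) ab).
  by move: lt_a; rewrite (depth_par ar).
case: (eqVneq (tpar a) b) => [pab|pa_nb].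
  have st := pstep_lab ar; rewrite pab in st.
  by move: (pstep_neq st); rewrite (ptle_anti (pstep_ptle st) ab) eqxx.
have [c hc cb] := tle_step pa_b pa_nb.
have ha : a \in children (tpar a) by rewrite inE ar eqxx.
by rewrite (lab_siblings ha hc ab (lab_tle cb)).
Qed.

Lemma lab_inj : injective lab.
Proof.
move=> a b e; apply: tle_anti; apply/lab_ptle; rewrite e; exact: ptle_refl.
Qed.

End ShuffleLabels.

Lemma iter_to_root (X : eqType) (f : X -> X) (r : X) (m : X -> nat) :
  (forall x, x != r -> m (f x) < m x) -> forall x, exists n, iter n f x = r.
Proof.
move=> dec x; elim: (m x).+1 {-2}x (ltnSn (m x)) => // k IH y lt_y.
case: (eqVneq y r) => [->|ne]; first by exists 0.
by have [n <-] := IH (f y) (leq_trans (dec y ne) lt_y); exists n.+1; rewrite iterSr.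
Qed.

Section PolicyShuffle.
Variables (S T : tree) (g : edge S * edge T -> bool).
Implicit Types w x y z : edge S * edge T.
Local Notation rt := (proot S T).

(* [g x] says that the vertex above an edge labelled [x] branches in [T]. *)
Definition next x : {set edge S * edge T} :=
  if g x then [set (x.1, t) | t in children x.2]
  else [set (s, x.2) | s in children x.1].

Definition succ : rel (edge S * edge T) := fun x y => y \in next x.

Definition reachable y : bool := connect succ rt y.

(* The coordinate that moves at [x] has not yet reached that of [y]. *)
Definition aims x y : bool := if g x then x.2 != y.2 else x.1 != y.1.

Variant next_spec x : edge S * edge T -> Prop :=
  | NextT t of g x & t \in children x.2 : next_spec x (x.1, t)
  | NextS s of ~~ g x & s \in children x.1 : next_spec x (s, x.2).

Lemma nextP x y : succ x y -> next_spec x y.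
Proof.
rewrite /succ /next; case: ifP => gx /imsetP [c hc ->]; first exact: NextT.
by apply: NextS; rewrite ?gx.
Qed.

Lemma succ_pstep x y : succ x y -> pstep x y.
Proof. by case/nextP => [t _ ht | s _ hs]; rewrite /pstep /= eqxx ?ht ?hs ?orbT. Qed.

Lemma succ_root x : ~~ succ x rt.
Proof.
by apply/negP => /succ_pstep /pdepth_pstep; rewrite /pdepth /= !depth_root.
Qed.

Lemma reachable_succ x y : reachable x -> succ x y -> reachable y.
Proof. by move=> rx sxy; apply: connect_trans rx (connect1 sxy). Qed.

Lemma reachable_ind (P : edge S * edge T -> Prop) :
  P rt -> (forall x y, reachable x -> P x -> succ x y -> P y) ->
  forall y, reachable y -> P y.
Proof.
move=> P0 Psucc.
suff walk p x : reachable x -> P x -> path succ x p -> P (last x p).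
  by move=> y /connectP [p sp ->]; apply: walk sp; [exact: connect0 |].
elim: p x => [|z p IH] x rx Px //= /andP [sxz sp].
exact: IH (reachable_succ rx sxz) (Psucc _ _ rx Px sxz) sp.
Qed.

Lemma reachable_pred y : reachable y -> y != rt -> exists2 x, reachable x & succ x y.
Proof.
by move: y; apply: reachable_ind => [|x y rx _ sxy _]; [rewrite eqxx | exists x].
Qed.

Lemma connect_ptle x y : connect succ x y -> ptle x y.
Proof.
case/connectP => p; elim: p x => [|z p IH] x /=; first by move=> _ ->; exact: ptle_refl.
by case/andP => /succ_pstep/pstep_ptle xz /IH zy /zy; exact: ptle_trans.
Qed.

Lemma connect_aims w z : connect succ w z -> w != z -> aims w z.
Proof.
case/connectP => [[|w' p]] /=; first by move=> _ ->; rewrite eqxx.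
case/andP => sww' pw' ez _.
have w'z : ptle w' z by apply: connect_ptle; apply/connectP; exists p.
rewrite /aims; case/nextP: sww' w'z => [t gw ht | s gw hs] [h1 h2] /=;
  rewrite ?gw ?(negbTE gw); apply/eqP => e.
- by apply: (child_not_tle ht); rewrite e.
- by apply: (child_not_tle hs); rewrite e.
Qed.

Lemma reachable_entryS y : reachable y -> y.1 != troot S ->
  exists t, [/\ tle t y.2, reachable (tpar y.1, t) & ~~ g (tpar y.1, t)].
Proof.
move: y; apply: reachable_ind => [|[s t] y rx IH]; first by rewrite eqxx.
case/nextP => [t' gx ht | s' gx hs] /= yr.
- have [t0 [t0t r0 g0]] := IH yr; exists t0; split=> //.
  exact: tle_trans t0t (tle_child ht).
- move: hs; rewrite inE => /andP [_ /eqP ->].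
  by exists t; split=> //; exact: tle_refl.
Qed.

Lemma reachable_entryT y : reachable y -> y.2 != troot T ->
  exists s, [/\ tle s y.1, reachable (s, tpar y.2) & g (s, tpar y.2)].
Proof.
move: y; apply: reachable_ind => [|[s t] y rx IH]; first by rewrite eqxx.
case/nextP => [t' gx ht | s' gx hs] /= yr.
- move: ht; rewrite inE => /andP [_ /eqP ->].
  by exists s; split=> //; exact: tle_refl.
- have [s0 [s0s r0 g0]] := IH yr; exists s0; split=> //.
  exact: tle_trans s0s (tle_child hs).
Qed.

Lemma reachable_connect x y : reachable x -> reachable y -> ptle x y -> connect succ x y.
Proof.
move=> rx ry; move: y ry x rx; apply: reachable_ind => [|z y rz IH szy] x rx xy.
  by rewrite (ptle_anti xy (ptle_root x)); exact: connect0.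
case: (eqVneq x y) => [->|nxy]; first exact: connect0.
suff xz : ptle x z by apply: connect_trans (IH x rx xz) (connect1 szy).
case/nextP: szy xy nxy => [t gz ht | s gz hs] [/= xy1 xy2] nxy.
- have pt : tpar t = z.2 by move: ht; rewrite inE => /andP [_ /eqP].
  split=> //; case: (eqVneq x.2 t) => [e2|]; last by rewrite -pt; exact: tle_below.
  (* Otherwise [x] entered [t] from some [(s0, z.2) <= z], and the path from
     there to [z] would have to leave [z.2]. *)
  have tr : x.2 != troot T by rewrite e2; move: ht; rewrite inE => /andP [].
  have [s0 [s0x r0 g0]] := reachable_entryT rx tr; rewrite e2 pt in r0 g0.
  have wz : ptle (s0, z.2) z by split; [exact: tle_trans s0x xy1 | exact: tle_refl].
  case: (eqVneq (s0, z.2) z) => [/(congr1 fst) /= e1 | ne].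
    case/negP: nxy; apply/andP; split; apply/eqP => //=.
    by apply: tle_anti xy1 _; rewrite -e1.
  by have := connect_aims (IH _ r0 wz) ne; rewrite /aims g0 eqxx.
- have ps : tpar s = z.1 by move: hs; rewrite inE => /andP [_ /eqP].
  split=> //; case: (eqVneq x.1 s) => [e1|]; last by rewrite -ps; exact: tle_below.
  have sr : x.1 != troot S by rewrite e1; move: hs; rewrite inE => /andP [].
  have [t0 [t0x r0 g0]] := reachable_entryS rx sr; rewrite e1 ps in r0 g0.
  have wz : ptle (z.1, t0) z by split; [exact: tle_refl | exact: tle_trans t0x xy2].
  case: (eqVneq (z.1, t0) z) => [/(congr1 snd) /= e2 | ne].
    case/negP: nxy; apply/andP; split; apply/eqP => //=.
    by apply: tle_anti xy2 _; rewrite -e2.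
  by have := connect_aims (IH _ r0 wz) ne; rewrite /aims (negbTE g0) eqxx.
Qed.

Lemma succ_pred x y : succ x y -> x = if g x then (y.1, tpar y.2) else (tpar y.1, y.2).
Proof.
case/nextP => [t gx ht | s gx hs]; rewrite ?gx ?(negbTE gx) /=;
  [move: ht | move: hs]; rewrite inE => /andP [_ /eqP ->]; exact: surjective_pairing.
Qed.

Lemma reachable_pred_uniq x1 x2 y :
  reachable x1 -> reachable x2 -> succ x1 y -> succ x2 y -> x1 = x2.
Proof.
wlog g1 : x1 x2 / ~~ g x1.
  move=> wl r1 r2 s1 s2; case g1: (g x1); last by apply: wl => //; rewrite g1.
  case g2: (g x2); last by symmetry; apply: wl => //; rewrite g2.
  by rewrite (succ_pred s1) (succ_pred s2) g1 g2.
move=> r1 r2; case/nextP => [t g1' _ | s _ hs] s2; first by rewrite g1' in g1.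
have ps : tpar s = x1.1 by move: hs; rewrite inE => /andP [_ /eqP].
case g2: (g x2); last by rewrite (succ_pred s2) g2 /= ps -surjective_pairing.
have := s2; rewrite /succ /next g2 => /imsetP [t ht [es et]].
have sr : x2.1 != troot S by rewrite -es; move: hs; rewrite inE => /andP [].
have [t0 [t0x r0 g0]] := reachable_entryS r2 sr; rewrite -es ps in r0 g0.
have px : tpar x1.2 = x2.2 by rewrite et; move: ht; rewrite inE => /andP [_ /eqP].
have wx : ptle (x1.1, t0) x1.
  by split; [exact: tle_refl | rewrite -px in t0x; exact: tle_trans t0x (tle_par _)].
case: (eqVneq (x1.1, t0) x1) => [/(congr1 snd) /= e0 | ne].
  have x1r : x1.2 \in children x2.2 by rewrite et.
  by case: (child_not_tle x1r); rewrite -e0.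
by have := connect_aims (reachable_connect r0 r1 wx) ne; rewrite /aims (negbTE g0) eqxx.
Qed.

Lemma reachable_towards y : (forall z, ptle z y -> z != y -> aims z y) -> reachable y.
Proof.
move=> aim.
suff walk : forall k x, pdepth y - pdepth x < k -> reachable x -> ptle x y -> reachable y.
  exact: (walk _ rt (ltnSn _) (connect0 _ _) (ptle_root y)).
elim=> // k IH x lt_k rx xy.
case: (eqVneq x y) => [<- // | nxy].
have [x' sxx' x'y] : exists2 x', succ x x' & ptle x' y.
  have := aim x xy nxy; rewrite /aims /succ /next; case: ifP => gx ne.
  - have [t ht ty] := tle_step xy.2 ne.
    by exists (x.1, t); [exact: imset_f | split; [exact: xy.1 |]].
  - have [s hs sy] := tle_step xy.1 ne.
    by exists (s, x.2); [exact: imset_f | split; [| exact: xy.2]].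
apply: (IH x' _ (reachable_succ rx sxx') x'y).
by have := pdepth_pstep (succ_pstep sxx'); have := ptle_pdepth x'y; lia.
Qed.

Definition pred_of y : edge S * edge T := odflt rt [pick x | reachable x && succ x y].

Lemma pred_of_reachable y : reachable (pred_of y).
Proof. by rewrite /pred_of; case: pickP => [x /andP [] | _] //=; exact: connect0. Qed.

Lemma pred_of_succ x y : reachable x -> succ x y -> pred_of y = x.
Proof.
move=> rx sxy; rewrite /pred_of; case: pickP => [x' /andP [rx' sx'y] | /(_ x)].
  exact: reachable_pred_uniq sxy.
by rewrite rx sxy.
Qed.

Lemma succ_pred_of y : reachable y -> y != rt -> succ (pred_of y) y.
Proof. by move=> ry /(reachable_pred ry) [x rx sxy]; rewrite (pred_of_succ rx sxy). Qed.

Lemma pred_of_root : pred_of rt = rt.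
Proof.
by rewrite /pred_of; case: pickP => [x /andP [_ sx] | //]; move: (succ_root x); rewrite sx.
Qed.

Local Notation pedge := {y : edge S * edge T | reachable y}.

Definition policy_root : pedge := exist _ rt (connect0 succ rt).

Definition policy_par (x : pedge) : pedge :=
  exist _ (pred_of (val x)) (pred_of_reachable (val x)).

Lemma policy_par_root : policy_par policy_root = policy_root.
Proof. exact/val_inj/pred_of_root. Qed.

Lemma policy_reach (x : pedge) : exists n, iter n policy_par x = policy_root.
Proof.
apply: (iter_to_root (m := fun x : pedge => pdepth (val x))) => {}x ne.
have vne : val x != rt by apply: contraNneq ne => e; apply/eqP/val_inj.
by rewrite /= (pdepth_pstep (succ_pstep (succ_pred_of (valP x) vne))).
Qed.

Definition policy_tree : tree := Tree policy_par_root policy_reach.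

Lemma val_children (a : edge policy_tree) : val @: children a = next (val a).
Proof.
apply/setP => y; apply/imsetP/idP => [[c] | sy].
  rewrite inE => /andP [cr /eqP pc] ->.
  have vcr : val c != rt by apply: contraNneq cr => e; apply/eqP/val_inj.
  have <- : pred_of (val c) = val a by rewrite -pc.
  exact: succ_pred_of (valP c) vcr.
exists (exist _ y (reachable_succ (valP a) sy)) => //.
rewrite inE; apply/andP; split.
  by apply: contraNneq (succ_root (val a)) => /(congr1 val) /= <-.
by apply/eqP/val_inj; exact: pred_of_succ (valP a) sy.
Qed.

Hypothesis g_leafS : forall x, x.1 \in leaves S -> g x.
Hypothesis g_leafT : forall x, g x -> x.2 \in leaves T -> x.1 \in leaves S.

Lemma next_eq0 x : (next x == set0) = (x.1 \in leaves S) && (x.2 \in leaves T).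
Proof.
have leafE (U : tree) (e : edge U) : (e \in leaves U) = (children e == set0).
  by rewrite inE.
rewrite /next; case: ifP => gx; rewrite imset_eq0 -leafE.
  by apply/idP/andP => [l2 | [_ //]]; split=> //; exact: g_leafT.
by have /negbTE -> : x.1 \notin leaves S by apply: contraFN gx; exact: g_leafS.
Qed.

Lemma in_policy_leaves (a : edge policy_tree) :
  (a \in leaves policy_tree) = ((val a).1 \in leaves S) && ((val a).2 \in leaves T).
Proof. by rewrite inE -(imset_eq0 val) val_children next_eq0. Qed.

Lemma reachable_leaves y : y.1 \in leaves S -> y.2 \in leaves T -> reachable y.
Proof.
move=> l1 l2; apply: reachable_towards => z [z1 z2] nzy; rewrite /aims; case: ifP => gz.
  apply: contraNneq nzy => e2; have zl : z.1 \in leaves S by apply: g_leafT; rewrite ?e2.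
  by apply/andP; split; apply/eqP; rewrite // (leaf_max zl z1).
by apply: contraFneq gz => e1; apply: g_leafS; rewrite e1.
Qed.

Lemma val_leaves : val @: leaves policy_tree = setX (leaves S) (leaves T).
Proof.
apply/setP => y; rewrite inE; apply/imsetP/andP => [[a] | [l1 l2]].
  by rewrite in_policy_leaves => /andP [? ?] ->.
by exists (exist _ y (reachable_leaves l1 l2)); rewrite ?in_policy_leaves /= ?l1 ?l2.
Qed.

Lemma policy_vertex (a : edge policy_tree) : a \notin leaves policy_tree ->
  {in children a &, injective val} /\
  (val @: children a = [set (s, (val a).2) | s in children (val a).1] \/
   val @: children a = [set ((val a).1, t) | t in children (val a).2]).
Proof.
move=> _; split; first exact: in2W val_inj.
by rewrite val_children /next; case: (g _); [right | left].
Qed.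

Definition policy_shuffle : shuffle S T :=
  @Shuffle S T policy_tree val (erefl _) (in2W val_inj) val_leaves policy_vertex.

End PolicyShuffle.

Section ChainShuffle.
Variables (S T : tree) (C : {set edge S * edge T}).
Hypothesis C_chain : is_chain (@ptle S T) C.

Definition chain_policy (x : edge S * edge T) : bool :=
  (x.1 \in leaves S) || [exists c in C, [&& c.1 == x.1, tleb x.2 c.2 & x.2 != c.2]].

Lemma chain_policy_leafS x : x.1 \in leaves S -> chain_policy x.
Proof. by rewrite /chain_policy => ->. Qed.

Lemma chain_policy_leafT x : chain_policy x -> x.2 \in leaves T -> x.1 \in leaves S.
Proof.
case/orP => // /exists_inP [c _ /and3P [_ /tlebP xc nxc]] l2.
by rewrite (leaf_max l2 xc) eqxx in nxc.
Qed.

Lemma chain_policy_aims c z : c \in C -> ptle z c -> z != c -> aims chain_policy z c.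
Proof.
move=> hc [z1 z2] nzc; rewrite /aims; case: ifP => gz.
  apply: contraNneq nzc => e2.
  suff e1 : z.1 = c.1 by apply/andP; split; apply/eqP.
  case/orP: gz => [/leaf_max/(_ z1) -> // |].
  case/exists_inP => c' hc' /and3P [/eqP e1 /tlebP zc' nzc'].
  case: (C_chain hc hc') => [[h1 _] | [_ h2]].
    by apply: tle_anti z1 _; rewrite -e1.
  have e : z.2 = c'.2 by apply: tle_anti zc' _; rewrite e2.
  by rewrite e eqxx in nzc'.
apply: contraFneq gz => e1; apply/orP; right; apply/exists_inP; exists c => //.
rewrite e1 eqxx /=; apply/andP; split; first exact/tlebP.
by apply: contraNneq nzc => e2; apply/andP; split; apply/eqP.
Qed.

Lemma chain_reachable c : c \in C -> reachable chain_policy c.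
Proof. by move=> hc; apply: reachable_towards => z; exact: chain_policy_aims. Qed.

Definition chain_shuffle : shuffle S T :=
  policy_shuffle chain_policy_leafS chain_policy_leafT.

End ChainShuffle.

Theorem mainTheorem14 (S T : tree) :
  (forall A : shuffle S T,
      injective (@sh_lab S T A) /\
      (forall a a' : edge (@sh_tree S T A), tle a a' -> ptle (@sh_lab S T A a) (@sh_lab S T A a')))
  /\
  (forall C : {set edge S * edge T},
      C != set0 -> is_chain (@ptle S T) C ->
      exists A : shuffle S T, exists D : {set edge (@sh_tree S T A)},
        is_chain (@tle (@sh_tree S T A)) D /\ @sh_lab S T A @: D = C).
Proof.
split=> [A | C _ C_chain].
  by split=> [|a b /lab_ptle]; [exact: lab_inj |].
pose A := chain_shuffle C.
exists A, [set a | sh_lab a \in C]; split.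
  move=> a b; rewrite !inE => ha hb.
  by case: (C_chain _ _ ha hb) => /(lab_ptle (A := A)); [left | right].
apply/setP => c; apply/imsetP/idP => [[a] | hc]; first by rewrite inE => ? ->.
by exists (exist _ c (chain_reachable C_chain hc)); rewrite ?inE.
Qed.
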